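(* Let $X,Y,Z$ be irreducible sofic shifts and $\Phi:X\to Y$, $\Psi:Y\to Z$ factor maps. If $\Psi\circ\Phi:X\to Z$ is right-continuing almost-everywhere with some retract, then $\Psi$ is right-continuing almost-everywhere with some retract.
   Context: Subshifts are closed shift-invariant subsets of $A^{\mathbb Z}$, $A$ finite, with shift $\sigma(x)_i=x_{i+1}$; a factor map is a continuous, shift-commuting, onto map. A point $y\in Y$ is left-transitive in $Y$ if $\{\sigma^i(y): i\le 0\}$ is dense in $Y$. For an integer $n\ge0$, a factor map $f:X\to Y$ is right-continuing almost-everywhere with retract $n$ if for every $x\in X$ and every left-transitive $y\in Y$ with $f(x)_i=y_i$ for all $i\le n$, there exists $x'\in X$ with $x'_i=x_i$ for all $i\le 0$ and $f(x')=y$; ''with some retract'' means this holds for some $n\ge0$. *)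

From mathcomp Require Import all_boot.
From Stdlib Require Import ZArith List.
Set Implicit Arguments. Unset Strict Implicit. Unset Printing Implicit Defensive.

Definition config (A : Type) := Z -> A.
Definition shiftspace (A : Type) := config A -> Prop.

Definition shiftn (A : Type) (k : Z) (x : config A) : config A :=
  fun i => x (i + k)%Z.
Definition shift (A : Type) (x : config A) : config A := shiftn 1 x.

Definition agree_on (A : Type) (n : Z) (x y : config A) : Prop :=
  forall i : Z, (- n <= i <= n)%Z -> x i = y i.

Fixpoint occurs_at (A : Type) (x : config A) (i : Z) (w : list A) : Prop :=
  match w with
  | nil => True
  | a :: w' => x i = a /\ occurs_at x (i + 1)%Z w'
  end.

(* Closedness in the product topology: every point all of whose central
   windows are approximated by points of X lies in X. *)
Definition closed_set (A : Type) (X : shiftspace A) : Prop :=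
  forall x : config A,
    (forall n : Z, exists y, X y /\ agree_on n x y) -> X x.

Definition shift_invariant (A : Type) (X : shiftspace A) : Prop :=
  forall x : config A, X x <-> X (shift x).

Definition subshift (A : finType) (X : shiftspace A) : Prop :=
  closed_set X /\ shift_invariant X.

Definition in_language (A : Type) (X : shiftspace A) (w : list A) : Prop :=
  exists x, X x /\ exists i, occurs_at x i w.

Definition irreducible (A : Type) (X : shiftspace A) : Prop :=
  forall u v : list A, in_language X u -> in_language X v ->
    exists w, in_language X (u ++ w ++ v).

(* f : X -> Y is a factor map: maps X into Y, continuous on X (product
   topology), commutes with the shift, and is onto Y.  Equalities of points
   are stated pointwise. *)
Definition maps_into (A B : Type) (X : shiftspace A) (Y : shiftspace B)
  (f : config A -> config B) : Prop := forall x, X x -> Y (f x).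

Definition continuous_on (A B : Type) (X : shiftspace A)
  (f : config A -> config B) : Prop :=
  forall x, X x -> forall n : Z, exists m : Z,
    forall x', X x' -> agree_on m x x' -> agree_on n (f x) (f x').

Definition commutes_shift (A B : Type) (X : shiftspace A)
  (f : config A -> config B) : Prop :=
  forall x, X x -> forall i, f (shift x) i = shift (f x) i.

Definition onto (A B : Type) (X : shiftspace A) (Y : shiftspace B)
  (f : config A -> config B) : Prop :=
  forall y, Y y -> exists x, X x /\ forall i, f x i = y i.

Definition factor_map (A B : Type) (X : shiftspace A) (Y : shiftspace B)
  (f : config A -> config B) : Prop :=
  [/\ maps_into X Y f, continuous_on X f, commutes_shift X f & onto X Y f].

Definition SFT (A : finType) (X : shiftspace A) : Prop :=
  exists F : list (list A),
    forall x, X x <-> (forall w, List.In w F -> forall i, ~ occurs_at x i w).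

Definition sofic (A : finType) (X : shiftspace A) : Prop :=
  subshift X /\
  exists (B : finType) (W : shiftspace B) (g : config B -> config A),
    SFT W /\ factor_map W X g.

Definition left_transitive (A : Type) (Y : shiftspace A) (y : config A) : Prop :=
  forall z, Y z -> forall n : Z, exists i : Z, (i <= 0)%Z /\ agree_on n (shiftn i y) z.

Definition rcae_retract (A B : Type) (X : shiftspace A) (Y : shiftspace B)
  (f : config A -> config B) (n : nat) : Prop :=
  forall x, X x -> forall y, Y y -> left_transitive Y y ->
    (forall i : Z, (i <= Z.of_nat n)%Z -> f x i = y i) ->
    exists x', X x' /\ (forall i : Z, (i <= 0)%Z -> x' i = x i) /\
               (forall i : Z, f x' i = y i).

Definition rcae (A B : Type) (X : shiftspace A) (Y : shiftspace B)
  (f : config A -> config B) : Prop := exists n : nat, rcae_retract X Y f n.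

(* The only property of Phi used is
   its uniform continuity: by compactness of X there is a radius a such that
   (Phi x)_0 depends only on x_[-a, a]; with the shift this means that points
   of X agreeing on (-oo, 0] have images agreeing on (-oo, -a].  Then Psi is
   right-continuing a.e. with retract n + a: given y in Y and a left-transitive
   z in Z with Psi y = z on (-oo, n + a], shift both by a, lift sigma^a y to
   some x in X, continue x along sigma^a z using the hypothesis on Psi o Phi,
   and shift the image of the continuation back by -a. *)
From Pilot Require Import Defs.
From mathcomp Require Import all_boot.
From Stdlib Require Import ZArith List.
From Stdlib Require Import Classical ClassicalEpsilon FunctionalExtensionality Lia.

Set Implicit Arguments. Unset Strict Implicit.
Open Scope Z_scope.

Lemma finite_uniform_bound (T : finType) (Q : T -> Z -> Prop) :
  (forall e m m', m <= m' -> Q e m -> Q e m') ->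
  (forall e, exists m, Q e m) -> exists M, forall e, Q e M.
Proof.
move=> Qmono Qex.
suff [M HM] : exists M, forall e, e \in enum T -> Q e M.
  by exists M => e; apply: HM; rewrite mem_enum.
elim: (enum T) => [|a s [M HM]]; first by exists 0.
have [ma Ha] := Qex a.
exists (Z.max M ma) => e; rewrite seq.in_cons => /orP [/eqP ->|He].
- by apply: (Qmono _ ma); first lia.
- by apply: (Qmono _ M); [lia | apply: HM].
Qed.

Section Compactness.
Variables (T : finType) (P : Z -> config T -> Prop).
Hypothesis P_antitone : forall m m' y, m <= m' -> P m' y -> P m y.
Hypothesis P_nonempty : forall m, exists y, P m y.

Definition agree_below (k : nat) (c y : config T) : Prop :=
  forall i, Z.abs i < Z.of_nat k -> c i = y i.

Definition extendable (k : nat) (c : config T) : Prop :=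
  forall m, exists y, P m y /\ agree_below k c y.

Lemma agree_below_trans k c d y :
  agree_below k c d -> agree_below k d y -> agree_below k c y.
Proof. by move=> Hcd Hdy i Hi; rewrite Hcd ?Hdy. Qed.

(* Koenig step: an extendable pattern of width k extends to one of width k+1,
   since only finitely many values at positions -k and k are possible. *)
Lemma extendable_step k c :
  extendable k c -> exists c', extendable k.+1 c' /\ agree_below k c c'.
Proof.
move=> Hc.
pose upd (e : T * T) : config T := fun i =>
  if i =? - Z.of_nat k then e.1 else if i =? Z.of_nat k then e.2 else c i.
have upd_below e : agree_below k c (upd e).
  move=> i Hi; rewrite /upd.
  by case: Z.eqb_spec => [?|_]; [lia | case: Z.eqb_spec => [?|//]; lia].
suff [e He] : exists e, extendable k.+1 (upd e) by exists (upd e).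
apply: NNPP => Hnone.
pose fails e m := ~ exists y, P m y /\ agree_below k.+1 (upd e) y.
have [M HM] : exists M, forall e, fails e M.
  apply: finite_uniform_bound.
  - move=> e m m' Hmm' Hf [y [Py Hy]]; apply: Hf.
    by exists y; split; first exact: P_antitone Py.
  - move=> e; apply: NNPP => Hex; apply: Hnone; exists e => m.
    by apply: NNPP => Hm; apply: Hex; exists m.
have [y [Py Hy]] := Hc M.
apply: (HM (y (- Z.of_nat k), y (Z.of_nat k))); exists y; split => // i Hi.
rewrite /upd; case: Z.eqb_spec => [-> //|?]; case: Z.eqb_spec => [-> //|?].
by apply: Hy; lia.
Qed.

Lemma cluster_point :
  exists c, forall n m, exists y, P m y /\ agree_on n c y.
Proof.
have [c0 _] := P_nonempty 0.
have Hg : forall kc : nat * config T, exists c',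
    extendable kc.1 kc.2 -> extendable kc.1.+1 c' /\ agree_below kc.1 kc.2 c'.
  move=> [k c]; case: (classic (extendable k c)) => Hk.
  - by have [c' Hc'] := extendable_step Hk; exists c'.
  - by exists c.
have [g gP] := choice _ Hg.
pose fix cs (k : nat) : config T := if k is k'.+1 then g (k', cs k') else c0.
have cs_ext k : extendable k (cs k).
  elim: k => [m|k IH]; last exact: (gP (k, cs k) IH).1.
  by have [y Py] := P_nonempty m; exists y; split => // i; lia.
have cs_coherent (k j : nat) : (k <= j)%nat -> agree_below k (cs k) (cs j).
  elim: j => [|j IH] Hkj; first by case: k Hkj => // _ i.
  have [-> //|Hne] := eqVneq k j.+1.
  have Hkj' : (k <= j)%nat by rewrite -ltnS ltn_neqAle Hne Hkj.
  apply: agree_below_trans (IH Hkj') _ => i Hi.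
  by apply: (gP (j, cs j) (cs_ext j)).2 => /=; move/leP: Hkj'; lia.
pose c i := cs (Z.to_nat (Z.abs i)).+1 i.
have c_below k : agree_below k c (cs k).
  move=> i Hi; apply: (cs_coherent _ k); [apply/leP | ]; lia.
exists c => n m.
have [y [Py Hy]] := cs_ext (Z.to_nat n).+1 m.
exists y; split => // i Hi.
by apply: (agree_below_trans (c_below _) Hy); lia.
Qed.
End Compactness.

(* Otherwise
   the pairs of points witnessing failure at every radius have a cluster point
   whose first component is a point of X where f is not continuous. *)
Lemma uniform_continuity_at_origin (A : finType) (B : Type)
    (X : shiftspace A) (f : config A -> config B) :
  closed_set X -> continuous_on X f ->
  exists m, forall x x', X x -> X x' -> agree_on m x x' -> f x 0 = f x' 0.
Proof.
move=> Xclosed fcont; apply: NNPP => Hnone.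
pose fstc (p : config (A * A)) : config A := fun i => (p i).1.
pose sndc (p : config (A * A)) : config A := fun i => (p i).2.
pose bad m p := [/\ X (fstc p), X (sndc p), agree_on m (fstc p) (sndc p)
                  & f (fstc p) 0 <> f (sndc p) 0].
have bad_antitone m m' p : m <= m' -> bad m' p -> bad m p.
  by move=> Hmm' [X1 X2 Ha Hne]; split => // i Hi; apply: Ha; lia.
have bad_nonempty m : exists p, bad m p.
  apply: NNPP => Hm; apply: Hnone; exists m => x x' Xx Xx' Ha.
  by apply: NNPP => Hne; apply: Hm; exists (fun i => (x i, x' i)).
have [c Hc] := cluster_point bad_antitone bad_nonempty.
have Xc : X (fstc c).
  apply: Xclosed => n; have [p [[Xp _ _ _] Hp]] := Hc n 0.
  by exists (fstc p); split => // i Hi; rewrite /fstc Hp.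
have [m0 Hm0] := fcont _ Xc 0.
have [p [[X1 X2 Ha Hne] Hp]] := Hc m0 m0.
have near1 : agree_on m0 (fstc c) (fstc p) by move=> i Hi; rewrite /fstc Hp.
have near2 : agree_on m0 (fstc c) (sndc p) by move=> i Hi; rewrite -Ha // near1.
apply: Hne; rewrite -(Hm0 _ X1 near1 0) ?(Hm0 _ X2 near2 0) //; lia.
Qed.

Lemma shiftn_zero (A : Type) (x : config A) : shiftn 0 x = x.
Proof. by apply: functional_extensionality => i; rewrite /shiftn Z.add_0_r. Qed.

Lemma shiftn_succ (A : Type) (k : Z) (x : config A) :
  shiftn (Z.succ k) x = Defs.shift (shiftn k x).
Proof.
by apply: functional_extensionality => i; rewrite /Defs.shift /shiftn; f_equal; lia.
Qed.

Lemma shiftn_closed (A : Type) (X : shiftspace A) :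
  shift_invariant X -> forall k x, X x -> X (shiftn k x).
Proof.
move=> Xsh; elim/Z.peano_ind => [|k IH|k IH] x Xx.
- by rewrite shiftn_zero.
- by rewrite shiftn_succ; apply/(Xsh (shiftn k x)); apply: IH.
- by apply/(Xsh (shiftn (Z.pred k) x)); rewrite -shiftn_succ Z.succ_pred; apply: IH.
Qed.

Lemma shiftn_commute (A B : Type) (X : shiftspace A) (f : config A -> config B) :
  shift_invariant X -> commutes_shift X f ->
  forall k x, X x -> forall i, f (shiftn k x) i = f x (i + k).
Proof.
move=> Xsh fsh; elim/Z.peano_ind => [|k IH|k IH] x Xx i.
- by rewrite shiftn_zero Z.add_0_r.
- rewrite shiftn_succ fsh; last exact: shiftn_closed.
  by rewrite /Defs.shift /shiftn IH //; f_equal; lia.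
- have := IH x Xx (i - 1).
  rewrite -{1}(Z.succ_pred k) shiftn_succ fsh; last exact: shiftn_closed.
  by rewrite {1}/Defs.shift {1}/shiftn Z.sub_add => ->; f_equal; lia.
Qed.

Lemma shiftn_left_transitive (A : Type) (Y : shiftspace A) (y : config A) k :
  0 <= k -> Defs.left_transitive Y y -> Defs.left_transitive Y (shiftn k y).
Proof.
move=> Hk ylt w Yw n; have [i [Hi Ha]] := ylt w Yw n.
exists (i - k); split; first lia.
by move=> j Hj; rewrite -Ha // /shiftn; f_equal; lia.
Qed.

Lemma past_determined (A B : Type) (X : shiftspace A) (f : config A -> config B) m :
  shift_invariant X -> commutes_shift X f ->
  (forall x x', X x -> X x' -> agree_on m x x' -> f x 0 = f x' 0) ->
  forall x x', X x -> X x' -> (forall i, i <= 0 -> x i = x' i) ->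
  forall j, j <= - m -> f x j = f x' j.
Proof.
move=> Xsh fsh Hm x x' Xx Xx' Hpast j Hj.
rewrite -[j]Z.add_0_l -!(shiftn_commute Xsh fsh) //.
apply: Hm; try exact: shiftn_closed.
by move=> i Hi; rewrite /shiftn Hpast //; lia.
Qed.

Lemma rcae_of_composite (A : finType) (B C : Type)
    (X : shiftspace A) (Y : shiftspace B) (Z : shiftspace C)
    (Phi : config A -> config B) (Psi : config B -> config C) :
  closed_set X -> shift_invariant X -> shift_invariant Y -> shift_invariant Z ->
  factor_map X Y Phi -> commutes_shift Y Psi ->
  rcae X Z (fun x => Psi (Phi x)) -> rcae Y Z Psi.
Proof.
move=> Xcl Xsh Ysh Zsh [PhiY Phicont Phish Phionto] Psish [n Hn].
have [m Hm] := uniform_continuity_at_origin Xcl Phicont.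
pose a := Z.to_nat m.
exists (Nat.add n a) => y Yy z Zz zlt Hyz.
pose ya := shiftn (Z.of_nat a) y; pose za := shiftn (Z.of_nat a) z.
have [x [Xx Hx]] := Phionto ya (shiftn_closed Ysh _ Yy).
have Phix : Phi x = ya by apply: functional_extensionality.
have [x' [Xx' [Hpast Hcont]]] : exists x', X x' /\
    (forall i, i <= 0 -> x' i = x i) /\ (forall i, Psi (Phi x') i = za i).
  apply: Hn => //; first exact: shiftn_closed.
    by apply: shiftn_left_transitive => //; lia.
  move=> i Hi; rewrite Phix (shiftn_commute Ysh Psish) // /za /shiftn.
  by apply: Hyz; lia.
have Hagree := past_determined Xsh Phish Hm Xx' Xx Hpast.
exists (shiftn (- Z.of_nat a) (Phi x')); split; last split.
- exact/(shiftn_closed Ysh)/PhiY.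
- move=> i Hi; rewrite /shiftn Hagree; last lia.
  by rewrite Phix /ya /shiftn; f_equal; lia.
- move=> i; rewrite (shiftn_commute Ysh Psish); last exact: PhiY.
  by rewrite Hcont /za /shiftn; f_equal; lia.
Qed.

Theorem mainTheorem5 (A B C : finType)
  (X : shiftspace A) (Y : shiftspace B) (Z : shiftspace C)
  (Phi : config A -> config B) (Psi : config B -> config C) :
  sofic X -> irreducible X ->
  sofic Y -> irreducible Y ->
  sofic Z -> irreducible Z ->
  factor_map X Y Phi -> factor_map Y Z Psi ->
  rcae X Z (fun x => Psi (Phi x)) ->
  rcae Y Z Psi.
Proof.
move=> [[Xcl Xsh] _] _ [[_ Ysh] _] _ [[_ Zsh] _] _ HPhi [_ _ Psish _].
exact: rcae_of_composite.
Qed.
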